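(* Let $n$ be odd and let $P$ be a generic $n$-gon in $\mathbb{R}^3$. If $P$ is not regular, then its mirror image (image under a reflection of $\mathbb{R}^3$ in a plane) is regular.
   Context: For a closed polygon $P=A_1\ldots A_n$ in $\mathbb{R}^3$ put $v_1=\overline{A_1A_2},\ldots,v_n=\overline{A_nA_1}$, indices cyclic mod $n$. $P$ is generic if any two consecutive $v_i,v_{i+1}$ are not collinear and any three consecutive $v_i,v_{i+1},v_{i+2}$ are not coplanar. A support system of $P$ is a tuple $u_1,\ldots,u_n$ of vectors with $[u_i,u_{i+1}]=v_{i+1}$ for all $i$ (cyclically; $[\cdot,\cdot]$ the cross product). A generic polygon is regular if it has a support system. *)

From HB Require Import structures.
From mathcomp Require Import all_boot all_order all_algebra.
From mathcomp Require Import reals.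
Set Implicit Arguments. Unset Strict Implicit. Unset Printing Implicit Defensive.
Import Order.TTheory GRing.Theory Num.Theory.
Local Open Scope ring_scope.

Section Poly3.
Variable R : realType.

Definition vec3 := 'rV[R]_3.

(* cross product: (u x v)_k = u_{k+1} v_{k+2} - u_{k+2} v_{k+1}, indices mod 3 *)
Definition cross (u v : vec3) : vec3 :=
  \row_(k < 3) (u 0 (k + 1)%R * v 0 (k + 1 + 1)%R - u 0 (k + 1 + 1)%R * v 0 (k + 1)%R).

Definition dot (u v : vec3) : R := \sum_(k < 3) u 0 k * v 0 k.

Definition collinear (u v : vec3) : bool := (\rank (col_mx u v) <= 1)%N.
Definition coplanar (u v w : vec3) : bool := (\rank (col_mx u (col_mx v w)) <= 2)%N.

(* a closed polygon A_1 ... A_n is a map 'I_n -> R^3; ordS is the cyclic successor *)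
Definition edge n (A : 'I_n -> vec3) (i : 'I_n) : vec3 := A (ordS i) - A i.

Definition generic n (A : 'I_n -> vec3) : Prop :=
  forall i : 'I_n,
    ~~ collinear (edge A i) (edge A (ordS i)) /\
    ~~ coplanar (edge A i) (edge A (ordS i)) (edge A (ordS (ordS i))).

Definition support_system n (A : 'I_n -> vec3) (u : 'I_n -> vec3) : Prop :=
  forall i : 'I_n, cross (u i) (u (ordS i)) = edge A (ordS i).

Definition regular n (A : 'I_n -> vec3) : Prop :=
  generic A /\ exists u : 'I_n -> vec3, support_system A u.

(* reflection of R^3 in the plane through p with normal vector nrm (nrm != 0) *)
Definition reflect_plane (p nrm : vec3) (x : vec3) : vec3 :=
  x - (2 * dot (x - p) nrm / dot nrm nrm) *: nrm.

End Poly3.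

From HB Require Import structures.
From mathcomp Require Import all_boot all_order all_algebra.
From mathcomp Require Import reals ring lra.
Import Order.TTheory GRing.Theory Num.Theory.
Set Implicit Arguments. Unset Strict Implicit.
Local Open Scope ring_scope.

(* For edge vectors v_i of a generic polygon put
   D_i = det (v_i, v_{i+1}, v_{i+2}) = <v_i x v_{i+1}, v_{i+2}>, nonzero by
   genericity.  The identity (a x b) x (b x c) = <a x b, c> b shows that
   u_i = lam_i (v_i x v_{i+1}) is a support system as soon as
   lam_i lam_{i+1} = 1 / D_i for all i (cyclically).  For n odd such lam
   exist whenever prod_i D_i > 0 (cyclic factorization lemma below).  Hence a
   generic, non-regular polygon with n odd has prod_i D_i < 0.  A reflection
   multiplies every edge by a fixed orthogonal matrix of determinant -1: it
   keeps genericity and negates each D_i, so it multiplies the product by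
   (-1)^n = -1, which makes the product positive and the mirror image
   regular. *)

Section CyclicFactorization.
Variable R : rcfType.

(* The forced solution of q_k q_{k+1} = f_k starting from q_0 = 1. *)
Fixpoint alt_quot (f : nat -> R) (k : nat) : R :=
  if k is k'.+1 then f k' / alt_quot f k' else 1.

Lemma alt_quot_prod_gt0 (f : nat -> R) k :
  (forall j, (j < k)%N -> f j != 0) -> 0 < alt_quot f k * \prod_(j < k) f j.
Proof.
elim: k => [|k IH] hf; first by rewrite big_ord0 mulr1 ltr01.
have IHk := IH (fun j hj => hf j (ltnW hj)).
have hq : alt_quot f k != 0 by apply/eqP => h; move: IHk; rewrite h mul0r ltxx.
have hfk : f k != 0 := hf k (ltnSn k).
have sq_gt0 (x : R) : x != 0 -> 0 < x ^+ 2.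
  by move=> hx; rewrite exprn_even_gt0 //= hx orbT.
rewrite big_ord_recr /=.
have -> : f k / alt_quot f k * ((\prod_(i < k) f i) * f k) =
   f k ^+ 2 * (alt_quot f k * \prod_(i < k) f i) / alt_quot f k ^+ 2 by field.
by apply: divr_gt0; [apply: mulr_gt0 => //; exact: sq_gt0 | exact: sq_gt0].
Qed.

Lemma alt_quot_neq0 (f : nat -> R) k :
  (forall j, (j < k)%N -> f j != 0) -> alt_quot f k != 0.
Proof.
by move=> /alt_quot_prod_gt0 hpos; apply/eqP => h; move: hpos; rewrite h mul0r ltxx.
Qed.

(* Rescaling q_k alternately by s and 1/s, with s^2 = q_m, closes the chain
   after an odd number m of steps. *)
Lemma odd_chain_factor (f : nat -> R) m : odd m ->
  (forall j, (j < m)%N -> f j != 0) -> 0 < \prod_(j < m) f j ->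
  exists L : nat -> R, (forall k, (k < m)%N -> L k * L k.+1 = f k) /\ L m = L 0.
Proof.
move=> hodd hf hP.
have hqm : 0 < alt_quot f m by rewrite -(pmulr_lgt0 _ hP); exact: alt_quot_prod_gt0.
pose s := Num.sqrt (alt_quot f m).
have hs0 : s != 0 by rewrite gt_eqF // sqrtr_gt0.
have hs2 : s ^+ 2 = alt_quot f m by rewrite sqr_sqrtr // ltW.
pose L k := if odd k then alt_quot f k / s else alt_quot f k * s.
exists L; split.
- move=> k hk; have hq := alt_quot_neq0 (fun j hj => hf j (ltn_trans hj hk)).
  by rewrite /L /=; case: (odd k) => /=; field; rewrite hq hs0.
- by rewrite /L hodd -hs2 /=; field.
Qed.

Lemma cyclic_factor (n : nat) (c : 'I_n -> R) : odd n ->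
  (forall i, c i != 0) -> 0 < \prod_i c i ->
  exists lam : 'I_n -> R, forall i, lam i * lam (ordS i) = c i.
Proof.
case: n c => [//|m] c hodd hc hP.
pose f k := c (inord k).
have fE (i : 'I_m.+1) : f i = c i by rewrite /f inord_val.
have hf j : (j < m.+1)%N -> f j != 0 by move=> _; exact: hc.
have hPf : 0 < \prod_(j < m.+1) f j by under eq_bigr => i _ do rewrite fE.
have [L [hL hLm]] := odd_chain_factor hodd hf hPf.
exists (fun i => L i) => i /=.
have [him | hmi] := ltnP i m.
  by rewrite modn_small // hL ?fE.
have him : val i = m by apply/eqP; rewrite eqn_leq hmi -ltnS ltn_ord.
by rewrite him modnn -hLm hL // /f; congr c; apply/val_inj; rewrite /= inordK.
Qed.

End CyclicFactorization.

Lemma det3 (R : comNzRingType) (A : 'M[R]_3) : \det A =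
  A 0 0 * (A 1 1 * A 2%:R 2%:R - A 1 2%:R * A 2%:R 1)
  - A 0 1 * (A 1 0 * A 2%:R 2%:R - A 1 2%:R * A 2%:R 0)
  + A 0 2%:R * (A 1 0 * A 2%:R 1 - A 1 1 * A 2%:R 0).
Proof.
rewrite (expand_det_row _ 0) !big_ord_recl big_ord0 /cofactor.
rewrite !(expand_det_row _ 0) !big_ord_recl !big_ord0 /cofactor !det_mx11 !mxE.
pose B (a b : nat) := A (inord a) (inord b).
have hA i j : A i j = B i j by rewrite /B !inord_val.
rewrite !hA /=; ring.
Qed.

Section VectorIdentities.
Variable R : realType.

(* The j-th coordinate of a row vector, indexed by a natural number, so
   that the coordinates of concrete expressions compute by simplification. *)
Definition coord (x : 'M[R]_(1,3)) (j : nat) : R := x 0 (inord j).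

Lemma coordE (x : 'M[R]_(1,3)) (j : 'I_3) : x 0 j = coord x j.
Proof. by rewrite /coord inord_val. Qed.

Lemma vec3P (x y : vec3 R) : (forall k : 'I_3, x 0 k = y 0 k) -> x = y.
Proof. by move=> h; apply/rowP => k; rewrite h. Qed.

Lemma cross_cross (a b c : vec3 R) :
  cross (cross a b) (cross b c) = dot (cross a b) c *: b.
Proof.
apply/vec3P => -[[|[|[|//]]] Hk];
  rewrite /dot !big_ord_recl big_ord0 !mxE /= !coordE /=; ring.
Qed.

Lemma crossZ (x y : R) (a b : vec3 R) :
  cross (x *: a) (y *: b) = (x * y) *: cross a b.
Proof. apply/vec3P => -[[|[|[|//]]] Hk]; rewrite !mxE /= !coordE /=; ring. Qed.

Lemma col_mx3E (a b c : vec3 R) (i : 'I_(1 + (1 + 1))) j :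
  col_mx a (col_mx b c) i j =
  if val i == 0%N then a 0 j else if val i == 1%N then b 0 j else c 0 j.
Proof.
rewrite mxE; case: splitP => [k /= hk|k /= hk]; first by rewrite hk ord1.
rewrite mxE; case: splitP => [l /= hl|l /= hl]; first by rewrite hk hl !ord1.
by rewrite hk hl !ord1.
Qed.

Lemma det_col_mx3 (a b c : vec3 R) :
  \det (col_mx a (col_mx b c)) = dot (cross a b) c.
Proof.
rewrite det3 /dot !big_ord_recl big_ord0 !col_mx3E !mxE /= !coordE /=; ring.
Qed.

Lemma dot_self_neq0 (x : vec3 R) : x != 0 -> dot x x != 0.
Proof.
move=> hx; apply/eqP => h; move/eqP: hx; apply; apply/vec3P => k.
rewrite [RHS]mxE; move: h; rewrite /dot !big_ord_recl big_ord0 /= !coordE /= => h.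
by case: k => -[|[|[|//]]] Hk /=; nra.
Qed.

End VectorIdentities.

Section RegularityCriterion.
Variable R : realType.

Definition triple_det n (v : 'I_n -> vec3 R) (i : 'I_n) : R :=
  \det (col_mx (v i) (col_mx (v (ordS i)) (v (ordS (ordS i))))).

Lemma generic_triple_det n (A : 'I_n -> vec3 R) :
  generic A -> forall i, triple_det (edge A) i != 0.
Proof.
move=> hg i; have [_] := hg i; rewrite /coplanar -ltnNge => hrk.
rewrite /triple_det -unitfE -unitmxE -row_free_unit /row_free.
by rewrite eqn_leq rank_leq_row.
Qed.

Lemma support_system_of_prod_gt0 n (A : 'I_n -> vec3 R) : odd n ->
  (forall i, triple_det (edge A) i != 0) ->
  0 < \prod_i triple_det (edge A) i -> exists u, support_system A u.
Proof.
move=> hodd hD hP.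
have hPV : 0 < \prod_i (triple_det (edge A) i)^-1 by rewrite prodfV invr_gt0.
have [lam hlam] := cyclic_factor hodd (fun i => invr_neq0 (hD i)) hPV.
exists (fun i => lam i *: cross (edge A i) (edge A (ordS i))) => i.
rewrite crossZ cross_cross scalerA hlam -det_col_mx3.
by rewrite -/(triple_det (edge A) i) mulVf ?scale1r.
Qed.

Lemma triple_det_mulmx n (v w : 'I_n -> vec3 R) (M : 'M[R]_3) i :
  (forall j, w j = v j *m M) -> triple_det w i = triple_det v i * \det M.
Proof. by move=> hwv; rewrite /triple_det !hwv -!mul_col_mx det_mulmx. Qed.

Lemma generic_mulmx n (A B : 'I_n -> vec3 R) (M : 'M[R]_3) :
  M \in unitmx -> (forall i, edge B i = edge A i *m M) ->
  generic A -> generic B.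
Proof.
move=> hM hBA hg i; rewrite -row_free_unit in hM.
by rewrite /collinear /coplanar !hBA -!mul_col_mx !mxrankMfree //; exact: hg.
Qed.

End RegularityCriterion.

(* The reflection in a plane with normal nrm acts on difference vectors as
   the matrix I - 2 nrm^T nrm / <nrm, nrm>, whose determinant is -1. *)
Section Reflection.
Variable R : realType.

Definition reflection_mx (nrm : vec3 R) : 'M[R]_3 :=
  \matrix_(i, j) ((i == j)%:R - 2 / dot nrm nrm * nrm 0 i * nrm 0 j).

Lemma det_reflection_mx nrm : nrm != 0 -> \det (reflection_mx nrm) = -1.
Proof.
move=> /dot_self_neq0; rewrite det3 !mxE /dot !big_ord_recl big_ord0 /=.
by rewrite !coordE /= addr0 => hN; field.
Qed.

Lemma reflection_mx_unit nrm : nrm != 0 -> reflection_mx nrm \in unitmx.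
Proof. by move=> hn; rewrite unitmxE det_reflection_mx // unitfE oppr_eq0 oner_eq0. Qed.

Lemma edge_reflect_plane n (A : 'I_n -> vec3 R) p nrm : nrm != 0 ->
  forall i, edge (fun j => reflect_plane p nrm (A j)) i = edge A i *m reflection_mx nrm.
Proof.
move=> /dot_self_neq0 hN i; apply/vec3P => k; move: hN.
rewrite /edge /reflect_plane !mxE /dot !big_ord_recl !big_ord0 !mxE.
rewrite /dot !big_ord_recl !big_ord0 /= !coordE /bump /= addr0 => hN.
by case: k => -[|[|[|//]]] Hk /=; field.
Qed.

End Reflection.

Unset Implicit Arguments.

Theorem mainTheorem2 (R : realType) (n : nat) (A : 'I_n -> vec3 R) :
  odd n -> generic A -> ~ regular A ->
  forall p nrm : vec3 R, nrm != 0 ->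
    regular (fun i => reflect_plane p nrm (A i)).
Proof.
move=> hodd hg hnr p nrm hn.
set B := fun i => reflect_plane p nrm (A i).
have hD := generic_triple_det hg.
have hDB i : triple_det (edge B) i = - triple_det (edge A) i.
  rewrite (triple_det_mulmx _ (edge_reflect_plane A p hn)).
  by rewrite det_reflection_mx // mulrN1.
have hneg : \prod_i triple_det (edge A) i < 0.
  rewrite ltNge; apply/negP => hge; apply: hnr; split => //.
  apply: support_system_of_prod_gt0 => //; rewrite lt0r hge andbT.
  by apply/prodf_neq0 => i _.
split.
  exact: generic_mulmx (reflection_mx_unit hn) (edge_reflect_plane A p hn) hg.
apply: support_system_of_prod_gt0 => // [i|]; first by rewrite hDB oppr_eq0.
under eq_bigr => i _ do rewrite hDB.
by rewrite prodrN card_ord -signr_odd hodd expr1 mulN1r oppr_gt0.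
Qed.
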